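(* Let $\Gamma$ be a finite group, $F:\Gamma\to\Gamma$ a group automorphism, and $\mathbf{E}=\bigoplus_{w\in\Gamma}\mathbf{E}_w$ a finite-dimensional associative $\bar{\mathbb{Q}}_l$-algebra with $1$ with $\dim\mathbf{E}_w=1$, $\mathbf{E}_w\mathbf{E}_y=\mathbf{E}_{wy}$; choose basis elements $b_w\in\mathbf{E}_w$. Let $\iota:\mathbf{E}\to\mathbf{E}$ be an algebra automorphism with $\iota(\mathbf{E}_w)=\mathbf{E}_{F(w)}$ for all $w$. Let $V$ be a simple $\mathbf{E}$-module admitting a linear isomorphism $\iota_V:V\to V$ with $\iota_V(ev)=\iota(e)\iota_V(v)$ for all $e,v$. If $x\in\Gamma$ is not effective, then $\mathrm{tr}(\iota_Vb_x,V)=0$.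
   Context: For $x\in\Gamma$ let $\Gamma_x=\{y\in\Gamma: F^{-1}(y)xy^{-1}=x\}$, and define $\gamma_x:\Gamma_x\to\bar{\mathbb{Q}}_l^*$ by $\iota^{-1}(b_y)b_x=\gamma_x(y)b_xb_y$. The element $x$ is called effective if $\gamma_x(y)=1$ for all $y\in\Gamma_x$. *)

From HB Require Import structures.
From mathcomp Require Import all_boot all_order all_algebra all_fingroup all_field.
Set Implicit Arguments. Unset Strict Implicit. Unset Printing Implicit Defensive.
Import GRing.Theory.
Local Open Scope ring_scope.

Definition lftr (K : fieldType) (V : vectType K) (f : 'End(V)) : K :=
  \tr (passmx.mxof (vbasis {:V}) (vbasis {:V}) f).

(* x is effective: for every y in Gamma_x = {y | F^{-1}(y) x y^{-1} = x},
   the scalar gamma_x(y) defined by  iota^{-1}(b_y) b_x = gamma_x(y) b_x b_y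
   equals 1.  Here F^{-1}(y) is written as the z with F z = y, and
   iota^{-1}(b_y) as the u with iota u = b_y. *)
Definition effective (gT : finGroupType) (K : fieldType) (E : falgType K)
  (F : gT -> gT) (iota : E -> E) (b : gT -> E) (x : gT) : Prop :=
  forall y z : gT, F z = y -> (z * x * y^-1)%g = x ->
  forall u : E, iota u = b y ->
  forall c : K, u * b x = c *: (b x * b y) -> c = 1.

Definition simple_module (K : fieldType) (E : falgType K) (V : vectType K)
  (act : E -> 'End(V)) : Prop :=
  {:V}%VS != 0%VS /\
  forall U : {vspace V}, (forall e : E, (act e @: U <= U)%VS) ->
    U = 0%VS \/ U = {:V}%VS.

From HB Require Import structures.
From mathcomp Require Import all_boot all_order all_algebra all_fingroup all_field.
From Stdlib Require Import Classical_Prop.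
Set Implicit Arguments. Unset Strict Implicit. Unset Printing Implicit Defensive.
Import GRing.Theory passmx.
Local Open Scope ring_scope.

(* If x is not effective, pick y and u with iota(u) = b_y and u b_x = c b_x b_y,
   c <> 1.  In a Gamma-graded algebra with one-dimensional pieces every b_y is
   invertible, so B := b_y acts invertibly on V, and the commutation rule of
   iota_V gives B (iota_V b_x) B^-1 = c (iota_V b_x).  Taking traces,
   tr(iota_V b_x) = c tr(iota_V b_x), hence the trace vanishes. *)

Section Trace.

Variables (K : fieldType) (V : vectType K).

Lemma lftrZ (k : K) (f : 'End(V)) : lftr (k *: f) = k * lftr f.
Proof. by rewrite /lftr linearZ mxtraceZ. Qed.

Lemma lftr_compC (f g : 'End(V)) : lftr (f \o g)%VF = lftr (g \o f)%VF.
Proof. by rewrite /lftr !(mxof_comp _ _ (vbasisP _)) mxtrace_mulC. Qed.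

Lemma lftr_skew_comm_eq0 (f g g' : 'End(V)) (c : K) :
  (g' \o g = \1)%VF -> (g \o g' = \1)%VF ->
  (g \o f = c *: (f \o g))%VF -> c != 1 -> lftr f = 0.
Proof.
move=> g'g1 gg'1 gf c_neq1.
have : c * lftr f = lftr f.
  rewrite -lftrZ -[f in c *: f]comp_lfun1r -gg'1 comp_lfunA comp_lfunZl -gf.
  by rewrite lftr_compC comp_lfunA g'g1 comp_lfun1l.
move/eqP; rewrite -subr_eq0 -[X in _ - X]mul1r -mulrBl mulf_eq0 subr_eq0.
by rewrite (negPf c_neq1) => /eqP.
Qed.

End Trace.

Section GradedAlgebra.

Variables (K : fieldType) (gT : finGroupType) (E : falgType K).
Variable Ew : gT -> {vspace E}.
Hypothesis Ew_dim : forall w, \dim (Ew w) = 1%N.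
Hypothesis Ew_mul : forall w y, (Ew w * Ew y)%VS = Ew (w * y)%g.
Hypothesis Ew_sum : (\sum_(w : gT) Ew w)%VS = {:E}%VS.
Variable b : gT -> E.
Hypothesis b_in : forall w, b w \in Ew w.
Hypothesis b_nz : forall w, b w != 0.

Lemma Ew_line w : Ew w = <[b w]>%VS.
Proof. by apply/eqP; rewrite eq_sym eqEdim -memvE b_in Ew_dim dim_vline b_nz. Qed.

Lemma mulb_neq0 w y : b w * b y != 0.
Proof.
have := dim_vline (b w * b y).
by rewrite -prodv_line -!Ew_line Ew_mul Ew_dim; case: (_ != 0).
Qed.

Lemma mulb_line w y : exists2 k : K, k != 0 & b w * b y = k *: b (w * y)%g.
Proof.
have : b w * b y \in Ew (w * y)%g by rewrite -Ew_mul memv_mul.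
rewrite Ew_line => /vlineP [k bwy]; exists k => //.
by apply: contraNneq (mulb_neq0 w y) => k0; rewrite bwy k0 scale0r.
Qed.

Lemma b1_scalar : exists2 l : K, l != 0 & b 1%g = l%:A.
Proof.
have [l l_neq0 b11] := mulb_line 1 1; rewrite mulg1 in b11.
have b1_mul w : b 1%g * b w = l *: b w.
  have [m m_neq0 b1w] := mulb_line 1 w; rewrite mul1g in b1w.
  (* associativity of b_1 b_1 b_w forces l m = m m *)
  have : b 1%g * b 1%g * b w = b 1%g * (b 1%g * b w) by rewrite mulrA.
  rewrite b11 b1w -scalerAl -scalerAr b1w !scalerA => /eqP.
  rewrite -subr_eq0 -scalerBl scaler_eq0 (negPf (b_nz w)) orbF subr_eq0.
  by move=> /eqP /(mulIf m_neq0) ->.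
have left_id_b1 a : (l^-1 *: b 1%g) * a = a.
  have : a \in (\sum_(w : gT) Ew w)%VS by rewrite Ew_sum memvf.
  case/memv_sumP => v v_in ->; rewrite mulr_sumr; apply: eq_bigr => w _.
  have := v_in w isT; rewrite Ew_line => /vlineP [k ->].
  by rewrite -scalerAr -scalerAl b1_mul !scalerA mulfVK.
exists l => //; have := left_id_b1 1; rewrite mulr1 => <-.
by rewrite scalerA divff // scale1r.
Qed.

Lemma b_unit y : b y \is a GRing.unit.
Proof.
have [l l_neq0 b1E] := b1_scalar.
have right_inv w : exists2 k : K, k != 0 & b w * b w^-1%g = k%:A.
  have [k k_neq0 ->] := mulb_line w w^-1; rewrite mulgV b1E scalerA.
  by exists (k * l); rewrite ?mulf_neq0.
have [k k_neq0 yr] := right_inv y.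
have [k' k'_neq0] := right_inv y^-1%g; rewrite invgK => ly.
set r := k^-1 *: b y^-1%g; set l' := k'^-1 *: b y^-1%g.
have yrK : b y * r = 1 by rewrite -scalerAr yr scalerA mulVf // scale1r.
have lyK : l' * b y = 1 by rewrite -scalerAl ly scalerA mulVf // scale1r.
have l'r : l' = r by rewrite -[l']mulr1 -yrK mulrA lyK mul1r.
by apply/unitrP; exists l'; rewrite {2}l'r.
Qed.

End GradedAlgebra.

Section Module.

Variables (K : fieldType) (E : falgType K) (V : vectType K).
Variable act : {linear E -> 'End(V)}.
Hypothesis act1 : act 1 = \1%VF.
Hypothesis actM : forall e f, act (e * f) = (act e \o act f)%VF.

Lemma act_unitK (u : E) : u \is a GRing.unit ->
  (act u^-1%R \o act u = \1)%VF /\ (act u \o act u^-1%R = \1)%VF.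
Proof. by move=> u_unit; rewrite -!actM mulVr ?mulrV. Qed.

Lemma act_twisted_skew_comm (iota : E -> E) (iotaV : 'End(V))
    (iotaV_comm : forall (e : E) (v : V), iotaV (act e v) = act (iota e) (iotaV v))
    (u a a' : E) (c : K) :
  iota u = a' -> u * a = c *: (a * a') ->
  (act a' \o (iotaV \o act a) = c *: ((iotaV \o act a) \o act a'))%VF.
Proof.
move=> <- ua; apply/lfunP => v; rewrite scale_lfunE !comp_lfunE -iotaV_comm.
rewrite -(comp_lfunE (act u)) -actM ua linearZ /= actM.
by rewrite scale_lfunE linearZ /= comp_lfunE.
Qed.

End Module.

Theorem mainTheorem15
  (K : closedFieldType) (charK0 : [pchar K] =i pred0)
  (gT : finGroupType)
  (F : gT -> gT) (F_morph : {morph F : a c / (a * c)%g}) (F_bij : bijective F)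
  (E : falgType K) (Ew : gT -> {vspace E})
  (Ew_dim : forall w, \dim (Ew w) = 1%N)
  (Ew_mul : forall w y, (Ew w * Ew y)%VS = Ew (w * y)%g)
  (Ew_sum : (\sum_(w : gT) Ew w)%VS = {:E}%VS)
  (Ew_direct : directv (\sum_(w : gT) Ew w)%VS)
  (b : gT -> E) (b_in : forall w, b w \in Ew w) (b_nz : forall w, b w != 0)
  (iota : {lrmorphism E -> E}) (iota_bij : bijective iota)
  (iota_grade : forall w, (linfun iota @: Ew w)%VS = Ew (F w))
  (V : vectType K) (act : {linear E -> 'End(V)})
  (act1 : act 1 = \1%VF)
  (actM : forall e f, act (e * f) = (act e \o act f)%VF)
  (V_simple : simple_module act)
  (iotaV : 'End(V)) (iotaV_bij : bijective iotaV)
  (iotaV_comm : forall (e : E) (v : V), iotaV (act e v) = act (iota e) (iotaV v))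
  (x : gT) :
  ~ effective F iota b x -> lftr (iotaV \o act (b x))%VF = 0.
Proof.
move=> not_eff.
have [y [u [c [iota_u ubx c_neq1]]]] : exists y u (c : K),
    [/\ iota u = b y, u * b x = c *: (b x * b y) & c != 1].
  apply: NNPP => no_witness; apply: not_eff => y _ _ _ u iota_u c ubx.
  by apply: NNPP => c_neq1; apply: no_witness; exists y, u, c; split=> //; apply/eqP.
have [byK byVK] := act_unitK act1 actM (b_unit Ew_dim Ew_mul Ew_sum b_in b_nz y).
apply: (lftr_skew_comm_eq0 byK byVK _ c_neq1).
exact (act_twisted_skew_comm actM iotaV_comm iota_u ubx).
Qed.
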